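(* Let $a>0$, $D>0$, $g>0$, $l_{\mathrm{c}}>0$, $c_{\infty}>0$ and $c_{\mathrm{s}}\ge 0$ be constants. A steady-state solution is a pair $(l_{\infty},c)$ with $l_{\infty}>0$ and $c\in C^2([0,l_{\infty}])$ satisfying \[ D c''(x)-a c'(x)-g c(x)=0\ (0<x<l_{\infty}),\qquad D c'(l_{\infty})=(a-gl_{\mathrm{c}})c_{\infty},\qquad c(l_{\infty})=c_{\infty},\qquad c(0)=c_{\mathrm{s}}. \] Set $R=\sqrt{a^2+4gD}$, $\lambda_{\pm}=(a\pm R)/(2D)$, \[ f(z)=\frac{1}{R}\left[\mathrm{e}^{-\lambda_+ z}\left(\frac{R+a}{2}-gl_{\mathrm{c}}\right)+\mathrm{e}^{-\lambda_- z}\left(\frac{R-a}{2}+gl_{\mathrm{c}}\right)\right], \] and, for a given $l_{\infty}>0$, \[ c(x)=\frac{c_{\infty}}{R}\left[\left(\frac{R+a}{2}-gl_{\mathrm{c}}\right)\mathrm{e}^{\lambda_+(x-l_{\infty})}+\left(\frac{R-a}{2}+gl_{\mathrm{c}}\right)\mathrm{e}^{\lambda_-(x-l_{\infty})}\right],\quad 0\le x\le l_{\infty}.\qquad(\ast) \] Then: (I) If $gl_{\mathrm{c}}<a$, then \[ z_0=\frac{D}{R}\log\frac{(R+a)(R+a-2gl_{\mathrm{c}})}{(R-a)(R-a+2gl_{\mathrm{c}})} \] satisfies $z_0>0$, and (i) if $c_{\mathrm{s}}/c_{\infty}<f(z_0)<1$, no steady-state solution exists; (ii) if $c_{\mathrm{s}}/c_{\infty}=f(z_0)$,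 there is a unique steady-state solution; it has $l_{\infty}=z_0$ and $c$ given by $(\ast)$, which is an increasing function; (iii) if $f(z_0)<c_{\mathrm{s}}/c_{\infty}<1$, there exist exactly two steady-state solutions $(l_{\infty 1},c_1)$, $(l_{\infty 2},c_2)$ with $0<l_{\infty 1}<z_0<l_{\infty 2}$, where $c_i$ is given by $(\ast)$ with $l_{\infty}=l_{\infty i}$; $c_1$ is increasing on $[0,l_{\infty 1}]$, and $c_2$ is decreasing on $[0,l_{\infty 2}-z_0]$ and increasing on $[l_{\infty 2}-z_0,l_{\infty 2}]$; (iv) if $c_{\mathrm{s}}/c_{\infty}\ge 1$, there is a unique steady-state solution; it has $l_{\infty}>z_0$, and $c$ given by $(\ast)$ is decreasing on $(0,l_{\infty}-z_0]$ and increasing on $[l_{\infty}-z_0,l_{\infty}]$. (II) If $gl_{\mathrm{c}}\ge a$, then there exists a steady-state solution if and only if $c_{\mathrm{s}}>c_{\infty}$; in that case the equation $f(l_{\infty})=c_{\mathrm{s}}/c_{\infty}$ has a unique solution $l_{\infty}>0$, the steady-state solution is unique, given by this $l_{\infty}$ and $(\ast)$, and $c$ is a decreasing function.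
   Context: This is the steady-state problem of a one-dimensional model of axonal growth: $c(x)$ is the tubulin concentration along an axon of length $l_{\infty}$, $a$ is the active transport velocity, $D$ the diffusion coefficient, $g$ the degradation rate, $l_{\mathrm{c}}$ the characteristic length of the growth cone, $c_{\infty}$ the steady-state growth cone concentration, and $c_{\mathrm{s}}$ the (constant) soma concentration. In every case, a steady-state length $l_{\infty}>0$ together with $c$ is a steady-state solution exactly when $f(l_{\infty})=c_{\mathrm{s}}/c_{\infty}$ and $c$ is given by $(\ast)$. *)

From Stdlib Require Import Reals.
From Coquelicot Require Import Coquelicot.
Open Scope R_scope.

(* [derive_within f lo hi x d]: d is the derivative of f at x relative to
   [lo,hi] (one-sided at the endpoints). *)
Definition derive_within (f : R -> R) (lo hi x d : R) : Prop :=
  filterlim (fun y => (f y - f x) / (y - x))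
    (within (fun y => lo <= y <= hi /\ y <> x) (locally x)) (locally d).

Definition continuous_within (f : R -> R) (lo hi x : R) : Prop :=
  filterlim f (within (fun y => lo <= y <= hi) (locally x)) (locally (f x)).

Definition C2_on (c c1 c2 : R -> R) (lo hi : R) : Prop :=
  forall x, lo <= x <= hi ->
    derive_within c lo hi x (c1 x) /\ derive_within c1 lo hi x (c2 x) /\
    continuous_within c2 lo hi x.

Definition steady_state (a D g lc cinf cs : R) (l : R) (c : R -> R) : Prop :=
  0 < l /\
  exists c1 c2 : R -> R,
    C2_on c c1 c2 0 l /\
    (forall x, 0 < x < l -> D * c2 x - a * c1 x - g * c x = 0) /\
    D * c1 l = (a - g * lc) * cinf /\
    c l = cinf /\
    c 0 = cs.

Definition Rr (a D g : R) : R := sqrt (a ^ 2 + 4 * g * D).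
Definition lam_p (a D g : R) : R := (a + Rr a D g) / (2 * D).
Definition lam_m (a D g : R) : R := (a - Rr a D g) / (2 * D).

Definition f_ss (a D g lc : R) (z : R) : R :=
  / Rr a D g *
  (exp (- lam_p a D g * z) * ((Rr a D g + a) / 2 - g * lc) +
   exp (- lam_m a D g * z) * ((Rr a D g - a) / 2 + g * lc)).

Definition c_star (a D g lc cinf l : R) (x : R) : R :=
  cinf / Rr a D g *
  (((Rr a D g + a) / 2 - g * lc) * exp (lam_p a D g * (x - l)) +
   ((Rr a D g - a) / 2 + g * lc) * exp (lam_m a D g * (x - l))).

Definition z0 (a D g lc : R) : R :=
  D / Rr a D g *
  ln (((Rr a D g + a) * (Rr a D g + a - 2 * g * lc)) /
      ((Rr a D g - a) * (Rr a D g - a + 2 * g * lc))).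

Definition incr_on (h : R -> R) (P : R -> Prop) : Prop :=
  forall x y, P x -> P y -> x < y -> h x < h y.
Definition decr_on (h : R -> R) (P : R -> Prop) : Prop :=
  forall x y, P x -> P y -> x < y -> h y < h x.

Definition same_sol (a D g lc cinf l' l : R) (c : R -> R) : Prop :=
  l = l' /\ forall x, 0 <= x <= l -> c x = c_star a D g lc cinf l' x.

From Stdlib Require Import Reals Lra Psatz.
From Coquelicot Require Import Coquelicot.
Open Scope R_scope.

(* Since [c_star l x = cinf * f_ss (l - x)], the steady states are exactly the
   pairs [(l, c_star l)] with [l > 0] and [f_ss l = cs / cinf]: the difference
   between a steady state and [c_star l] solves the homogeneous ODE with zero
   value and slope at [l], and factoring the ODE through its characteristic
   roots [lam_p > 0 > lam_m] reduces its vanishing to two first-order problems.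
   The derivative of [f_ss] has the sign of [B (-lam_m) exp (R z / D) - A lam_p],
   where [A], [B > 0] are the two coefficients of [f_ss] and
   [A lam_p + B lam_m = R (a - g lc) / D].  If [g lc < a] this changes sign
   exactly at [z0], so [f_ss] decreases from [f_ss 0 = 1] to its minimum at [z0]
   and then increases to [+oo]; if [g lc >= a], [f_ss] increases on [[0, +oo)].
   The intermediate value theorem and strict monotonicity count the roots, and
   the monotonicity of [c] is read off that of [f_ss]. *)

Lemma derive_within_iff f lo hi x d :
  derive_within f lo hi x d <->
  forall eps, 0 < eps -> exists del, 0 < del /\
    forall y, lo <= y <= hi -> y <> x -> Rabs (y - x) < del ->
    Rabs ((f y - f x) / (y - x) - d) < eps.
Proof.
unfold derive_within, within; rewrite filterlim_locally; split.
- intros H eps he. destruct (H (mkposreal eps he)) as [del Hdel].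
  exists del; split; [apply cond_pos|]. intros y hy hyx hyd. exact (Hdel y hyd (conj hy hyx)).
- intros H [eps he]. destruct (H eps he) as [del [hdel Hdel]].
  exists (mkposreal del hdel). intros y hyd [hy hyx]. exact (Hdel y hy hyx hyd).
Qed.

Lemma continuous_within_iff f lo hi x :
  continuous_within f lo hi x <->
  forall eps, 0 < eps -> exists del, 0 < del /\
    forall y, lo <= y <= hi -> Rabs (y - x) < del -> Rabs (f y - f x) < eps.
Proof.
unfold continuous_within, within; rewrite filterlim_locally; split.
- intros H eps he. destruct (H (mkposreal eps he)) as [del Hdel].
  exists del; split; [apply cond_pos|]. intros y hy hyd. exact (Hdel y hyd hy).
- intros H [eps he]. destruct (H eps he) as [del [hdel Hdel]].
  exists (mkposreal del hdel). intros y hyd hy. exact (Hdel y hy hyd).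
Qed.

Lemma continuous_within_of_continuity_pt f lo hi x :
  continuity_pt f x -> continuous_within f lo hi x.
Proof.
intros H. apply (filterlim_filter_le_1 _ (filter_le_within _)).
now apply continuity_pt_filterlim.
Qed.

Lemma continuity_pt_of_derivable_pt_lim f x d :
  derivable_pt_lim f x d -> continuity_pt f x.
Proof. intros H. exact (derivable_continuous_pt _ _ (exist _ _ H)). Qed.

Lemma continuous_within_plus u v lo hi x :
  continuous_within u lo hi x -> continuous_within v lo hi x ->
  continuous_within (fun y => u y + v y) lo hi x.
Proof. intros Hu Hv. exact (filterlim_comp_2 _ _ _ Hu Hv (filterlim_plus (u x) (v x))). Qed.

Lemma continuous_within_minus u v lo hi x :
  continuous_within u lo hi x -> continuous_within v lo hi x ->
  continuous_within (fun y => u y - v y) lo hi x.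
Proof.
intros Hu Hv. apply continuous_within_plus; [exact Hu|].
eapply filterlim_comp; [exact Hv | apply (filterlim_opp (v x))].
Qed.

Lemma continuous_within_mult u v lo hi x :
  continuous_within u lo hi x -> continuous_within v lo hi x ->
  continuous_within (fun y => u y * v y) lo hi x.
Proof. intros Hu Hv. exact (filterlim_comp_2 _ _ _ Hu Hv (filterlim_mult (u x) (v x))). Qed.

Lemma derive_within_of_derivable_pt_lim f lo hi x d :
  derivable_pt_lim f x d -> derive_within f lo hi x d.
Proof.
intros H. apply derive_within_iff. intros eps he. destruct (H eps he) as [[del hdel] Hdel].
exists del; split; [exact hdel|]. intros y _ hyx hyd.
specialize (Hdel (y - x) ltac:(lra) hyd). now replace (x + (y - x)) with y in Hdel by ring.
Qed.

Lemma derivable_pt_lim_of_derive_within f lo hi x d :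
  lo < x < hi -> derive_within f lo hi x d -> derivable_pt_lim f x d.
Proof.
intros hx H eps he. destruct (proj1 (derive_within_iff _ _ _ _ _) H eps he) as [del [hdel Hdel]].
assert (hm : 0 < Rmin del (Rmin (x - lo) (hi - x))) by (repeat apply Rmin_pos; lra).
exists (mkposreal _ hm). intros h hh hhd; simpl in hhd.
pose proof (Rmin_l del (Rmin (x - lo) (hi - x))). pose proof (Rmin_r del (Rmin (x - lo) (hi - x))).
pose proof (Rmin_l (x - lo) (hi - x)). pose proof (Rmin_r (x - lo) (hi - x)).
pose proof (Rabs_def2 _ _ hhd).
specialize (Hdel (x + h)). replace (x + h - x) with h in Hdel by ring.
apply Hdel; [lra | intros e; apply hh; lra | lra ].
Qed.

Lemma continuous_within_of_derive_within f lo hi x d :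
  derive_within f lo hi x d -> continuous_within f lo hi x.
Proof.
intros H. apply continuous_within_iff. intros eps he.
destruct (proj1 (derive_within_iff _ _ _ _ _) H 1 Rlt_0_1) as [del [hdel Hdel]].
set (K := Rabs d + 1). assert (hK : 0 < K) by (pose proof (Rabs_pos d); unfold K; lra).
exists (Rmin del (eps / K)); split; [apply Rmin_pos; [lra | apply Rdiv_lt_0_compat; lra]|].
intros y hy hyd'. pose proof (Rmin_l del (eps / K)). pose proof (Rmin_r del (eps / K)).
assert (hyd : Rabs (y - x) < del) by lra. assert (hyK : Rabs (y - x) < eps / K) by lra.
destruct (Req_dec y x) as [->|hyx]; [now rewrite Rminus_diag, Rabs_R0|].
(* the difference quotient stays within 1 of d, so |f y - f x| <= K |y - x| *)
specialize (Hdel y hy hyx hyd).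
assert (hq : Rabs ((f y - f x) / (y - x)) <= K).
{ pose proof (Rabs_triang_inv ((f y - f x) / (y - x)) d). unfold K; lra. }
replace (f y - f x) with ((f y - f x) / (y - x) * (y - x)) by (field; lra).
rewrite Rabs_mult. apply Rlt_div_r in hyK; [|lra].
pose proof (Rabs_pos (y - x)). nra.
Qed.

Lemma continuous_within_eq_of_open u lo hi C x :
  lo < hi -> (forall y, lo < y < hi -> u y = C) -> lo <= x <= hi ->
  continuous_within u lo hi x -> u x = C.
Proof.
intros hlh hC hx Hu.
destruct (Req_dec (u x) C) as [|hne]; [assumption|exfalso].
destruct (proj1 (continuous_within_iff _ _ _ _) Hu (Rabs (u x - C))) as [del [hdel Hdel]].
{ apply Rabs_pos_lt; lra. }
assert (hy : exists y, lo < y < hi /\ Rabs (y - x) < del).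
{ set (t := Rmin del (hi - lo) / 4).
  assert (ht : 0 < t < del /\ t < (hi - lo) / 2).
  { pose proof (Rmin_l del (hi - lo)). pose proof (Rmin_r del (hi - lo)).
    pose proof (Rmin_pos del (hi - lo) hdel ltac:(lra)). unfold t; lra. }
  destruct (Rle_lt_dec x ((lo + hi) / 2)).
  - exists (x + t). split; [lra|]. apply Rabs_def1; lra.
  - exists (x - t). split; [lra|]. apply Rabs_def1; lra. }
destruct hy as [y [hy hyx]].
specialize (Hdel y ltac:(lra) hyx). rewrite hC, Rabs_minus_sym in Hdel by exact hy. lra.
Qed.

Lemma derivable_pt_lim_0_const phi lo hi :
  (forall x, lo < x < hi -> derivable_pt_lim phi x 0) ->
  forall x y, lo < x < hi -> lo < y < hi -> phi x = phi y.
Proof.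
intros H.
assert (Hlt : forall x y, lo < x -> y < hi -> x < y -> phi x = phi y).
{ intros x y hx hy hxy.
  destruct (MVT_cor2 phi (fun _ => 0) x y hxy) as [t [Ht _]].
  - intros t ht. apply H; lra.
  - lra. }
intros x y hx hy. destruct (Rtotal_order x y) as [h|[->|h]].
- apply Hlt; lra.
- reflexivity.
- symmetry; apply Hlt; lra.
Qed.

Lemma linear_first_order_zero h h' k lo hi :
  lo < hi ->
  (forall x, lo < x < hi -> derivable_pt_lim h x (h' x)) ->
  (forall x, lo < x < hi -> h' x = k * h x) ->
  (forall x, lo <= x <= hi -> continuous_within h lo hi x) ->
  h hi = 0 -> forall x, lo <= x <= hi -> h x = 0.
Proof.
intros hlh Hd Hk Hc Hhi.
(* the integrating factor exp (- k x) makes h constant *)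
set (phi := fun x => h x * exp (- k * x)).
assert (He : forall x, derivable_pt_lim (fun x => exp (- k * x)) x (exp (- k * x) * - k)).
{ intros x. apply is_derive_Reals. auto_derive; [exact I | ring]. }
assert (Hphi' : forall x, lo < x < hi -> derivable_pt_lim phi x 0).
{ intros x hx.
  replace 0 with (h' x * exp (- k * x) + h x * (exp (- k * x) * - k))
    by (rewrite (Hk x hx); ring).
  exact (derivable_pt_lim_mult _ _ _ _ _ (Hd x hx) (He x)). }
assert (Hphic : forall x, lo <= x <= hi -> continuous_within phi lo hi x).
{ intros x hx. apply continuous_within_mult; [exact (Hc x hx)|].
  apply continuous_within_of_continuity_pt.
  exact (continuity_pt_of_derivable_pt_lim _ _ _ (He x)). }
set (m := (lo + hi) / 2).
assert (Hopen : forall y, lo < y < hi -> phi y = phi m).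
{ intros y hy. apply (derivable_pt_lim_0_const phi lo hi Hphi'); unfold m; lra. }
assert (Hm : phi m = 0).
{ rewrite <- (continuous_within_eq_of_open phi lo hi (phi m) hi hlh Hopen ltac:(lra)
              (Hphic hi ltac:(lra))).
  unfold phi; rewrite Hhi; ring. }
intros x hx.
pose proof (continuous_within_eq_of_open phi lo hi (phi m) x hlh Hopen hx (Hphic x hx)) as Hx.
rewrite Hm in Hx. unfold phi in Hx. pose proof (exp_pos (- k * x)). nra.
Qed.

Lemma linear_second_order_zero e e1 e2 p q lo hi :
  lo < hi ->
  (forall x, lo < x < hi ->
     derivable_pt_lim e x (e1 x) /\ derivable_pt_lim e1 x (e2 x)) ->
  (forall x, lo < x < hi -> e2 x - (p + q) * e1 x + p * q * e x = 0) ->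
  (forall x, lo <= x <= hi ->
     continuous_within e lo hi x /\ continuous_within e1 lo hi x) ->
  e hi = 0 -> e1 hi = 0 -> forall x, lo <= x <= hi -> e x = 0.
Proof.
intros hlh Hd Hode Hc He He1.
(* (d/dx - p) (d/dx - q) e = 0: first w := e' - q e vanishes, then e *)
set (w := fun x => e1 x - q * e x).
assert (Hw : forall x, lo <= x <= hi -> w x = 0).
{ apply (linear_first_order_zero w (fun x => e2 x - q * e1 x) p lo hi hlh).
  - intros x hx. destruct (Hd x hx) as [d0 d1].
    apply derivable_pt_lim_minus; [exact d1 | now apply derivable_pt_lim_scal].
  - intros x hx. unfold w. pose proof (Hode x hx). lra.
  - intros x hx. destruct (Hc x hx) as [c0 c1].
    apply continuous_within_minus; [exact c1|].
    apply continuous_within_mult; [|exact c0].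
    apply continuous_within_of_continuity_pt, continuity_pt_const. now intros ? ?.
  - unfold w. rewrite He, He1. ring. }
apply (linear_first_order_zero e e1 q lo hi hlh); [| | |exact He].
- intros x hx. exact (proj1 (Hd x hx)).
- intros x hx. pose proof (Hw x ltac:(lra)) as H. unfold w in H. lra.
- intros x hx. exact (proj1 (Hc x hx)).
Qed.

Lemma incr_on_of_derive_pos h h' (P : R -> Prop) :
  (forall t, derivable_pt_lim h t (h' t)) ->
  (forall x y t, P x -> P y -> x < t < y -> 0 < h' t) -> incr_on h P.
Proof.
intros Hd Hpos x y hx hy hxy.
destruct (MVT_cor2 h h' x y hxy (fun t _ => Hd t)) as [t [Ht ht]].
pose proof (Hpos x y t hx hy ht). nra.
Qed.

Lemma decr_on_of_derive_neg h h' (P : R -> Prop) :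
  (forall t, derivable_pt_lim h t (h' t)) ->
  (forall x y t, P x -> P y -> x < t < y -> h' t < 0) -> decr_on h P.
Proof.
intros Hd Hneg x y hx hy hxy.
destruct (MVT_cor2 h h' x y hxy (fun t _ => Hd t)) as [t [Ht ht]].
pose proof (Hneg x y t hx hy ht). nra.
Qed.

Lemma incr_on_inj h (P : R -> Prop) x y :
  incr_on h P -> P x -> P y -> h x = h y -> x = y.
Proof.
intros Hh hx hy Hxy. destruct (Rtotal_order x y) as [l|[e|l]]; [|exact e|].
- pose proof (Hh x y hx hy l); lra.
- pose proof (Hh y x hy hx l); lra.
Qed.

Lemma decr_on_inj h (P : R -> Prop) x y :
  decr_on h P -> P x -> P y -> h x = h y -> x = y.
Proof.
intros Hh hx hy Hxy. destruct (Rtotal_order x y) as [l|[e|l]]; [|exact e|].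
- pose proof (Hh x y hx hy l); lra.
- pose proof (Hh y x hy hx l); lra.
Qed.

Lemma IVT_value (h : R -> R) T x y :
  (forall t, continuity_pt h t) -> x <= y -> (h x - T) * (h y - T) <= 0 ->
  exists l, x <= l <= y /\ h l = T.
Proof.
intros Hc hxy hs.
destruct (IVT_cor (fun t => h t - T) x y) as [l [hl Hl]]; [| exact hxy | exact hs |].
- intros t. apply continuity_pt_minus; [apply Hc | now apply continuity_pt_const].
- exists l. split; [exact hl | lra].
Qed.

Section Profile.
Variables a D g lc : R.
Hypotheses (ha : 0 < a) (hD : 0 < D) (hg : 0 < g) (hlc : 0 < lc).

Local Notation Rd := (Rr a D g).
Local Notation lp := (lam_p a D g).
Local Notation lm := (lam_m a D g).
Local Notation A := ((Rr a D g + a) / 2 - g * lc).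
Local Notation B := ((Rr a D g - a) / 2 + g * lc).
Local Notation f := (f_ss a D g lc).

Lemma Rr_sqr : Rd * Rd = a ^ 2 + 4 * g * D.
Proof. apply sqrt_sqrt. nra. Qed.

Lemma Rr_gt_a : a < Rd.
Proof. pose proof Rr_sqr. pose proof (sqrt_pos (a ^ 2 + 4 * g * D)). unfold Rr in *. nra. Qed.

Lemma lam_p_pos : 0 < lp.
Proof. pose proof Rr_gt_a. unfold lam_p. apply Rdiv_lt_0_compat; lra. Qed.

Lemma lam_m_neg : lm < 0.
Proof. pose proof Rr_gt_a. unfold lam_m. apply Rdiv_neg_pos; lra. Qed.

Lemma lam_sum : D * (lp + lm) = a.
Proof. unfold lam_p, lam_m. field. lra. Qed.

Lemma lam_prod : D * (lp * lm) = - g.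
Proof.
unfold lam_p, lam_m.
replace (D * ((a + Rd) / (2 * D) * ((a - Rd) / (2 * D)))) with ((a * a - Rd * Rd) / (4 * D))
  by (field; lra).
rewrite Rr_sqr. field. lra.
Qed.

Lemma lam_diff : lp - lm = Rd / D.
Proof. unfold lam_p, lam_m. field. lra. Qed.

Lemma lam_p_char : D * lp ^ 2 - a * lp - g = 0.
Proof. pose proof lam_sum. pose proof lam_prod. nra. Qed.

Lemma lam_m_char : D * lm ^ 2 - a * lm - g = 0.
Proof. pose proof lam_sum. pose proof lam_prod. nra. Qed.

Lemma B_pos : 0 < B.
Proof. pose proof Rr_gt_a. nra. Qed.

Lemma A_lam_p_add_B_lam_m : A * lp + B * lm = Rd * (a - g * lc) / D.
Proof. unfold lam_p, lam_m. field. lra. Qed.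

Lemma f_ss_0 : f 0 = 1.
Proof.
unfold f_ss. rewrite !Rmult_0_r, exp_0. pose proof Rr_gt_a.
replace (1 * A + 1 * B) with Rd by field. field. lra.
Qed.

Definition f_ss' z := / Rd * exp (- lp * z) * (B * - lm * exp (Rd / D * z) - A * lp).

Lemma derivable_f_ss z : derivable_pt_lim f z (f_ss' z).
Proof.
apply is_derive_Reals. unfold f_ss, f_ss'. auto_derive; [exact I|].
replace (exp (- lm * z)) with (exp (- lp * z) * exp (Rd / D * z)).
- ring.
- rewrite <- exp_plus, <- lam_diff. f_equal; ring.
Qed.

Lemma continuity_f_ss z : continuity_pt f z.
Proof. exact (continuity_pt_of_derivable_pt_lim _ _ _ (derivable_f_ss z)). Qed.

Lemma f_ss'_scale_pos z : 0 < / Rd * exp (- lp * z).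
Proof.
pose proof Rr_gt_a. apply Rmult_lt_0_compat; [apply Rinv_0_lt_compat; lra | apply exp_pos].
Qed.

Lemma f_ss'_pos z : A * lp < B * - lm * exp (Rd / D * z) -> 0 < f_ss' z.
Proof. intros H. pose proof (f_ss'_scale_pos z). unfold f_ss'. nra. Qed.

Lemma f_ss'_neg z : B * - lm * exp (Rd / D * z) < A * lp -> f_ss' z < 0.
Proof. intros H. pose proof (f_ss'_scale_pos z). unfold f_ss'. nra. Qed.

Lemma f_ss_ge_linear z : 0 <= z -> (B * - lm * z - Rabs A) / Rd <= f z.
Proof.
intros hz. pose proof Rr_gt_a. pose proof B_pos. pose proof lam_p_pos. pose proof lam_m_neg.
assert (hp : 0 < exp (- lp * z) <= 1).
{ split; [apply exp_pos|]. rewrite <- exp_0.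
  destruct (Req_dec z 0) as [->|hz0]; [right; f_equal; ring | left; apply exp_increasing; nra]. }
assert (hm : 1 + - lm * z <= exp (- lm * z)) by apply exp_ineq1_le.
assert (hA : - Rabs A <= exp (- lp * z) * A).
{ destruct (Rcase_abs A); [rewrite Rabs_left | rewrite Rabs_right]; nra. }
unfold f_ss. apply Rmult_le_reg_l with Rd; [lra|].
replace (Rd * ((B * - lm * z - Rabs A) / Rd)) with (B * - lm * z - Rabs A) by (field; lra).
replace (Rd * (/ Rd * (exp (- lp * z) * A + exp (- lm * z) * B)))
  with (exp (- lp * z) * A + exp (- lm * z) * B) by (field; lra).
nra.
Qed.

Lemma f_ss_unbounded M T : exists z, M <= z /\ T < f z.
Proof.
pose proof Rr_gt_a. pose proof B_pos. pose proof lam_m_neg.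
set (z := Rmax M 0 + (Rabs T * Rd + Rabs A + 1) / (B * - lm)).
assert (hK : 0 <= (Rabs T * Rd + Rabs A + 1) / (B * - lm)).
{ apply Rdiv_le_0_compat; [pose proof (Rabs_pos T); pose proof (Rabs_pos A); nra | nra]. }
pose proof (Rmax_l M 0). pose proof (Rmax_r M 0).
exists z. split; [unfold z; lra|].
apply Rlt_le_trans with ((B * - lm * z - Rabs A) / Rd); [|apply f_ss_ge_linear; unfold z; lra].
apply Rlt_div_r; [lra|].
assert (hBz : Rabs T * Rd + Rabs A + 1 <= B * - lm * z).
{ unfold z. rewrite Rmult_plus_distr_l.
  replace (B * - lm * ((Rabs T * Rd + Rabs A + 1) / (B * - lm))) with (Rabs T * Rd + Rabs A + 1)
    by (field; split; lra).
  assert (0 <= B * - lm * Rmax M 0) by (apply Rmult_le_pos; [nra | lra]).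
  lra. }
pose proof (Rle_abs T). nra.
Qed.

Lemma f_ss_root_above M T : f M <= T -> exists l, M <= l /\ f l = T.
Proof.
intros hM. destruct (f_ss_unbounded M T) as [Z [hZ hT]].
destruct (IVT_value f T M Z continuity_f_ss hZ) as [l [hl Hl]]; [nra|].
exists l. split; [lra | exact Hl].
Qed.

Lemma steady_ode_roots u u1 u2 :
  D * u2 - a * u1 - g * u = 0 -> u2 - (lp + lm) * u1 + lp * lm * u = 0.
Proof.
intros H. apply Rmult_eq_reg_l with D; [|lra].
replace (D * (u2 - (lp + lm) * u1 + lp * lm * u))
  with (D * u2 - D * (lp + lm) * u1 + D * (lp * lm) * u) by ring.
rewrite lam_sum, lam_prod. lra.
Qed.

Lemma c_star_f_ss cinf l x : c_star a D g lc cinf l x = cinf * f (l - x).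
Proof.
unfold c_star, f_ss.
replace (- lp * (l - x)) with (lp * (x - l)) by ring.
replace (- lm * (l - x)) with (lm * (x - l)) by ring.
unfold Rdiv. ring.
Qed.

Definition c_star' cinf l x :=
  cinf / Rd * (A * lp * exp (lp * (x - l)) + B * lm * exp (lm * (x - l))).

Definition c_star'' cinf l x :=
  cinf / Rd * (A * lp ^ 2 * exp (lp * (x - l)) + B * lm ^ 2 * exp (lm * (x - l))).

Lemma derivable_c_star cinf l x :
  derivable_pt_lim (c_star a D g lc cinf l) x (c_star' cinf l x).
Proof.
apply is_derive_Reals. unfold c_star, c_star'. auto_derive; [exact I | unfold Rminus; ring].
Qed.

Lemma derivable_c_star' cinf l x :
  derivable_pt_lim (c_star' cinf l) x (c_star'' cinf l x).
Proof.
apply is_derive_Reals. unfold c_star', c_star''. auto_derive; [exact I | unfold Rminus; ring].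
Qed.

Lemma continuity_c_star'' cinf l x : continuity_pt (c_star'' cinf l) x.
Proof.
apply continuity_pt_filterlim. apply (ex_derive_continuous (K := R_AbsRing) (V := R_NormedModule)).
unfold c_star''. auto_derive. exact I.
Qed.

Lemma c_star_ode cinf l x :
  D * c_star'' cinf l x - a * c_star' cinf l x - g * c_star a D g lc cinf l x = 0.
Proof.
unfold c_star, c_star', c_star''.
transitivity (cinf / Rd * (A * exp (lp * (x - l)) * (D * lp ^ 2 - a * lp - g)
                          + B * exp (lm * (x - l)) * (D * lm ^ 2 - a * lm - g))).
- ring.
- rewrite lam_p_char, lam_m_char. ring.
Qed.

Lemma c_star_at_l cinf l : c_star a D g lc cinf l l = cinf.
Proof. rewrite c_star_f_ss, Rminus_diag, f_ss_0. ring. Qed.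

Lemma c_star'_at_l cinf l : D * c_star' cinf l l = (a - g * lc) * cinf.
Proof.
unfold c_star'. rewrite Rminus_diag, !Rmult_0_r, exp_0.
transitivity (cinf / Rd * (A * lp + B * lm) * D); [ring|].
rewrite A_lam_p_add_B_lam_m. pose proof Rr_gt_a. field. lra.
Qed.

Section CaseI.
Hypothesis hI : g * lc < a.

Local Notation z := (z0 a D g lc).

Lemma A_pos : 0 < A.
Proof. pose proof Rr_gt_a. lra. Qed.

Lemma B_lam_m_lt_A_lam_p : B * - lm < A * lp.
Proof.
pose proof A_lam_p_add_B_lam_m. pose proof Rr_gt_a.
assert (0 < Rd * (a - g * lc) / D) by (apply Rdiv_lt_0_compat; nra).
lra.
Qed.

Lemma z0_eq : z = D / Rd * ln (A * lp / (B * - lm)).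
Proof.
unfold z0. f_equal. f_equal. pose proof Rr_gt_a. pose proof B_pos. pose proof lam_m_neg.
unfold lam_p, lam_m. field. repeat split; lra.
Qed.

Lemma z0_pos : 0 < z.
Proof.
rewrite z0_eq. pose proof Rr_gt_a. pose proof B_pos. pose proof lam_m_neg.
pose proof B_lam_m_lt_A_lam_p.
apply Rmult_lt_0_compat; [apply Rdiv_lt_0_compat; lra|].
rewrite <- ln_1. apply ln_increasing; [lra|].
apply Rlt_div_r; nra.
Qed.

(* z0 is the critical point of f_ss *)
Lemma z0_exp : B * - lm * exp (Rd / D * z) = A * lp.
Proof.
rewrite z0_eq. pose proof Rr_gt_a. pose proof B_pos. pose proof lam_m_neg.
pose proof A_pos. pose proof lam_p_pos.
replace (Rd / D * (D / Rd * ln (A * lp / (B * - lm)))) with (ln (A * lp / (B * - lm)))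
  by (field; lra).
rewrite exp_ln; [field; lra|]. apply Rdiv_lt_0_compat; nra.
Qed.

Lemma f_ss_decr_on : decr_on f (fun t => t <= z).
Proof.
apply (decr_on_of_derive_neg f f_ss'); [exact derivable_f_ss|].
intros x y t _ hy ht. apply f_ss'_neg. rewrite <- z0_exp.
pose proof B_pos. pose proof lam_m_neg. pose proof Rr_gt_a.
apply Rmult_lt_compat_l; [nra|]. apply exp_increasing.
apply Rmult_lt_compat_l; [apply Rdiv_lt_0_compat|]; lra.
Qed.

Lemma f_ss_incr_on : incr_on f (fun t => z <= t).
Proof.
apply (incr_on_of_derive_pos f f_ss'); [exact derivable_f_ss|].
intros x y t hx _ ht. apply f_ss'_pos. rewrite <- z0_exp.
pose proof B_pos. pose proof lam_m_neg. pose proof Rr_gt_a.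
apply Rmult_lt_compat_l; [nra|]. apply exp_increasing.
apply Rmult_lt_compat_l; [apply Rdiv_lt_0_compat|]; lra.
Qed.

Lemma f_ss_strict_min t : t <> z -> f z < f t.
Proof.
intros ht. destruct (Rtotal_order t z) as [h|[h|h]]; [| contradiction |].
- apply f_ss_decr_on; lra.
- apply f_ss_incr_on; lra.
Qed.

End CaseI.

Section CaseII.
Hypothesis hII : a <= g * lc.

Lemma f_ss_incr_on_nonneg : incr_on f (fun t => 0 <= t).
Proof.
apply (incr_on_of_derive_pos f f_ss'); [exact derivable_f_ss|].
intros x y t hx _ ht. apply f_ss'_pos.
pose proof A_lam_p_add_B_lam_m. pose proof Rr_gt_a. pose proof B_pos. pose proof lam_m_neg.
assert (Rd * (a - g * lc) / D <= 0).
{ unfold Rdiv. apply Rmult_le_0_r; [nra | left; apply Rinv_0_lt_compat; lra]. }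
assert (1 < exp (Rd / D * t)).
{ rewrite <- exp_0. apply exp_increasing. apply Rmult_lt_0_compat; [apply Rdiv_lt_0_compat|]; lra. }
assert (B * - lm < B * - lm * exp (Rd / D * t)).
{ rewrite <- (Rmult_1_r (B * - lm)) at 1. apply Rmult_lt_compat_l; nra. }
lra.
Qed.

End CaseII.

Section SteadyState.
Variables cinf cs : R.
Hypothesis hcinf : 0 < cinf.

Local Notation ss := (steady_state a D g lc cinf cs).
Local Notation cst := (c_star a D g lc cinf).

Lemma steady_state_c_star l : 0 < l -> f l = cs / cinf -> ss l (cst l).
Proof.
intros hl hf. split; [exact hl|].
exists (c_star' cinf l), (c_star'' cinf l). repeat split.
- apply derive_within_of_derivable_pt_lim, derivable_c_star.
- apply derive_within_of_derivable_pt_lim, derivable_c_star'.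
- apply continuous_within_of_continuity_pt, continuity_c_star''.
- intros x _. apply c_star_ode.
- apply c_star'_at_l.
- apply c_star_at_l.
- rewrite c_star_f_ss, Rminus_0_r, hf. field. lra.
Qed.

Lemma steady_state_inv l c :
  ss l c -> 0 < l /\ f l = cs / cinf /\ same_sol a D g lc cinf l l c.
Proof.
intros [hl [c1 [c2 [HC2 [Hode [Hc1l [Hcl Hc0]]]]]]].
assert (Heq : forall x, 0 <= x <= l -> c x - cst l x = 0).
{ apply (linear_second_order_zero (fun x => c x - cst l x) (fun x => c1 x - c_star' cinf l x)
           (fun x => c2 x - c_star'' cinf l x) lp lm 0 l hl).
  - intros x hx. destruct (HC2 x ltac:(lra)) as [d1 [d2 _]]. split.
    + apply derivable_pt_lim_minus; [|apply derivable_c_star].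
      exact (derivable_pt_lim_of_derive_within _ _ _ _ _ hx d1).
    + apply derivable_pt_lim_minus; [|apply derivable_c_star'].
      exact (derivable_pt_lim_of_derive_within _ _ _ _ _ hx d2).
  - intros x hx. apply steady_ode_roots.
    pose proof (Hode x hx). pose proof (c_star_ode cinf l x). lra.
  - intros x hx. destruct (HC2 x hx) as [d1 [d2 _]].
    split; apply continuous_within_minus.
    + exact (continuous_within_of_derive_within _ _ _ _ _ d1).
    + apply continuous_within_of_continuity_pt.
      exact (continuity_pt_of_derivable_pt_lim _ _ _ (derivable_c_star cinf l x)).
    + exact (continuous_within_of_derive_within _ _ _ _ _ d2).
    + apply continuous_within_of_continuity_pt.
      exact (continuity_pt_of_derivable_pt_lim _ _ _ (derivable_c_star' cinf l x)).
  - rewrite Hcl, c_star_at_l. ring.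
  - pose proof (c_star'_at_l cinf l). apply Rmult_eq_reg_l with D; lra. }
split; [exact hl|]. split.
- pose proof (Heq 0 ltac:(lra)) as H0. rewrite Hc0, c_star_f_ss, Rminus_0_r in H0.
  replace cs with (cinf * f l) by lra. field. lra.
- split; [reflexivity|]. intros x hx. pose proof (Heq x hx). lra.
Qed.

Lemma steady_state_same_sol_of_root l0 :
  (forall l, 0 < l -> f l = cs / cinf -> l = l0) ->
  forall l c, ss l c -> same_sol a D g lc cinf l0 l c.
Proof.
intros Hroot l c H. destruct (steady_state_inv l c H) as [hl [hf Hs]].
rewrite <- (Hroot l hl hf). exact Hs.
Qed.

Lemma c_star_incr_on l (P Q : R -> Prop) :
  decr_on f Q -> (forall x, P x -> Q (l - x)) -> incr_on (cst l) P.
Proof.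
intros Hf HPQ x y hx hy hxy. rewrite !c_star_f_ss.
apply Rmult_lt_compat_l; [exact hcinf|].
apply Hf; [exact (HPQ y hy) | exact (HPQ x hx) | lra].
Qed.

Lemma c_star_decr_on l (P Q : R -> Prop) :
  incr_on f Q -> (forall x, P x -> Q (l - x)) -> decr_on (cst l) P.
Proof.
intros Hf HPQ x y hx hy hxy. rewrite !c_star_f_ss.
apply Rmult_lt_compat_l; [exact hcinf|].
apply Hf; [exact (HPQ y hy) | exact (HPQ x hx) | lra].
Qed.

Section CaseI.
Hypothesis hI : g * lc < a.

Local Notation z := (z0 a D g lc).

Lemma no_steady_state_below_min : cs / cinf < f z -> forall l c, ~ ss l c.
Proof.
intros hT l c H. destruct (steady_state_inv l c H) as [_ [hf _]].
destruct (Req_dec l z) as [->|hne]; [lra|].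
pose proof (f_ss_strict_min hI l hne). lra.
Qed.

Lemma unique_steady_state_at_min :
  cs / cinf = f z ->
  ss z (cst z) /\
  (forall l c, ss l c -> same_sol a D g lc cinf z l c) /\
  incr_on (cst z) (fun x => 0 <= x <= z).
Proof.
intros hT. split; [|split].
- apply steady_state_c_star; [exact (z0_pos hI) | lra].
- apply steady_state_same_sol_of_root. intros l _ hf.
  destruct (Req_dec l z) as [->|hne]; [reflexivity|].
  pose proof (f_ss_strict_min hI l hne). lra.
- apply (c_star_incr_on z _ _ (f_ss_decr_on hI)). cbv beta. intros x hx. lra.
Qed.

Lemma two_steady_states :
  f z < cs / cinf -> cs / cinf < 1 ->
  exists l1 l2,
    0 < l1 < z /\ z < l2 /\
    ss l1 (cst l1) /\ ss l2 (cst l2) /\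
    (forall l c, ss l c ->
       same_sol a D g lc cinf l1 l c \/ same_sol a D g lc cinf l2 l c) /\
    incr_on (cst l1) (fun x => 0 <= x <= l1) /\
    decr_on (cst l2) (fun x => 0 <= x <= l2 - z) /\
    incr_on (cst l2) (fun x => l2 - z <= x <= l2).
Proof.
intros hzT hT1. pose proof (z0_pos hI) as hz.
destruct (IVT_value f (cs / cinf) 0 z continuity_f_ss ltac:(lra)) as [l1 [hl1 hf1]].
{ rewrite f_ss_0. nra. }
destruct (f_ss_root_above z (cs / cinf) ltac:(lra)) as [l2 [hl2 hf2]].
assert (hl10 : l1 <> 0) by (intros ->; rewrite f_ss_0 in hf1; lra).
assert (hl1z : l1 <> z) by (intros ->; lra).
assert (hl2z : l2 <> z) by (intros ->; lra).
exists l1, l2. split; [lra|]. split; [lra|].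
split; [apply steady_state_c_star; lra|]. split; [apply steady_state_c_star; lra|].
split; [|split; [|split]].
- intros l c H. destruct (steady_state_inv l c H) as [hl [hf Hs]].
  destruct (Rle_or_lt l z) as [hlz|hlz].
  + left.
    rewrite <- (decr_on_inj f _ l l1 (f_ss_decr_on hI) hlz ltac:(cbv beta; lra) ltac:(lra)).
    exact Hs.
  + right.
    rewrite <- (incr_on_inj f _ l l2 (f_ss_incr_on hI) ltac:(cbv beta; lra)
                  ltac:(cbv beta; lra) ltac:(lra)).
    exact Hs.
- apply (c_star_incr_on l1 _ _ (f_ss_decr_on hI)). cbv beta. intros x hx. lra.
- apply (c_star_decr_on l2 _ _ (f_ss_incr_on hI)). cbv beta. intros x hx. lra.
- apply (c_star_incr_on l2 _ _ (f_ss_decr_on hI)). cbv beta. intros x hx. lra.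
Qed.

Lemma unique_steady_state_above_one :
  1 <= cs / cinf ->
  exists l,
    z < l /\ ss l (cst l) /\
    (forall l' c, ss l' c -> same_sol a D g lc cinf l l' c) /\
    decr_on (cst l) (fun x => 0 < x <= l - z) /\
    incr_on (cst l) (fun x => l - z <= x <= l).
Proof.
intros hT. pose proof (z0_pos hI) as hz.
assert (hz1 : f z < 1) by (rewrite <- f_ss_0; apply f_ss_strict_min; lra).
destruct (f_ss_root_above z (cs / cinf) ltac:(lra)) as [l [hl hf]].
assert (hlz0 : l <> z) by (intros ->; lra).
exists l. split; [lra|]. split; [apply steady_state_c_star; lra|]. split; [|split].
- apply steady_state_same_sol_of_root. intros l' hl' hf'.
  destruct (Rle_or_lt l' z) as [hlz|hlz].
  + pose proof (f_ss_decr_on hI 0 l' ltac:(cbv beta; lra) hlz hl'). rewrite f_ss_0 in *. lra.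
  + exact (incr_on_inj f _ l' l (f_ss_incr_on hI) ltac:(cbv beta; lra)
             ltac:(cbv beta; lra) ltac:(lra)).
- apply (c_star_decr_on l _ _ (f_ss_incr_on hI)). cbv beta. intros x hx. lra.
- apply (c_star_incr_on l _ _ (f_ss_decr_on hI)). cbv beta. intros x hx. lra.
Qed.

End CaseI.

Section CaseII.
Hypothesis hII : a <= g * lc.

Lemma unique_steady_state_case_II :
  cinf < cs ->
  exists l,
    0 < l /\ f l = cs / cinf /\
    (forall l', 0 < l' -> f l' = cs / cinf -> l' = l) /\
    ss l (cst l) /\
    (forall l' c, ss l' c -> same_sol a D g lc cinf l l' c) /\
    decr_on (cst l) (fun x => 0 <= x <= l).
Proof.
intros hcs. assert (hT : 1 < cs / cinf) by (apply Rlt_div_r; lra).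
destruct (f_ss_root_above 0 (cs / cinf) ltac:(rewrite f_ss_0; lra)) as [l [hl hf]].
assert (hl0 : l <> 0) by (intros ->; rewrite f_ss_0 in hf; lra).
assert (Hroot : forall l', 0 < l' -> f l' = cs / cinf -> l' = l).
{ intros l' hl' hf'.
  exact (incr_on_inj f _ l' l (f_ss_incr_on_nonneg hII) ltac:(cbv beta; lra)
           ltac:(cbv beta; lra) ltac:(lra)). }
exists l. split; [lra|]. split; [exact hf|]. split; [exact Hroot|].
split; [apply steady_state_c_star; lra|]. split.
- exact (steady_state_same_sol_of_root l Hroot).
- apply (c_star_decr_on l _ _ (f_ss_incr_on_nonneg hII)). cbv beta. intros x hx. lra.
Qed.

Lemma steady_state_exists_iff_case_II : (exists l c, ss l c) <-> cinf < cs.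
Proof.
split.
- intros [l [c H]]. destruct (steady_state_inv l c H) as [hl [hf _]].
  pose proof (f_ss_incr_on_nonneg hII 0 l ltac:(cbv beta; lra) ltac:(cbv beta; lra) hl) as H0.
  rewrite f_ss_0, hf in H0. apply Rlt_div_r in H0; lra.
- intros hcs. destruct (unique_steady_state_case_II hcs) as [l [_ [_ [_ [Hss _]]]]].
  exists l, (cst l). exact Hss.
Qed.

End CaseII.

End SteadyState.

End Profile.

Theorem theorem1 (a D g lc cinf cs : R)
  (ha : 0 < a) (hD : 0 < D) (hg : 0 < g) (hlc : 0 < lc) (hcinf : 0 < cinf)
  (hcs : 0 <= cs) :
  let f := f_ss a D g lc in
  let cst := c_star a D g lc cinf in
  let ss := steady_state a D g lc cinf cs in
  let z := z0 a D g lc in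
  (g * lc < a ->
     0 < z /\
     (* (i) *)
     (cs / cinf < f z -> f z < 1 -> forall l c, ~ ss l c) /\
     (* (ii) *)
     (cs / cinf = f z ->
        ss z (cst z) /\
        (forall l c, ss l c -> same_sol a D g lc cinf z l c) /\
        incr_on (cst z) (fun x => 0 <= x <= z)) /\
     (* (iii) *)
     (f z < cs / cinf -> cs / cinf < 1 ->
        exists l1 l2,
          0 < l1 < z /\ z < l2 /\
          ss l1 (cst l1) /\ ss l2 (cst l2) /\
          (forall l c, ss l c ->
             same_sol a D g lc cinf l1 l c \/ same_sol a D g lc cinf l2 l c) /\
          incr_on (cst l1) (fun x => 0 <= x <= l1) /\
          decr_on (cst l2) (fun x => 0 <= x <= l2 - z) /\
          incr_on (cst l2) (fun x => l2 - z <= x <= l2)) /\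
     (* (iv) *)
     (1 <= cs / cinf ->
        exists l,
          z < l /\ ss l (cst l) /\
          (forall l' c, ss l' c -> same_sol a D g lc cinf l l' c) /\
          decr_on (cst l) (fun x => 0 < x <= l - z) /\
          incr_on (cst l) (fun x => l - z <= x <= l))) /\
  (a <= g * lc ->
     ((exists l c, ss l c) <-> cinf < cs) /\
     (cinf < cs ->
        exists l,
          0 < l /\ f l = cs / cinf /\
          (forall l', 0 < l' -> f l' = cs / cinf -> l' = l) /\
          ss l (cst l) /\
          (forall l' c, ss l' c -> same_sol a D g lc cinf l l' c) /\
          decr_on (cst l) (fun x => 0 <= x <= l))).
Proof.
cbv zeta. split.
- intros hI. split; [|split; [|split; [|split]]].
  + apply z0_pos; assumption.
  + intros hT _. apply no_steady_state_below_min; assumption.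
  + apply unique_steady_state_at_min; assumption.
  + apply two_steady_states; assumption.
  + apply unique_steady_state_above_one; assumption.
- intros hII. split.
  + apply steady_state_exists_iff_case_II; assumption.
  + apply unique_steady_state_case_II; assumption.
Qed.
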